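(* Let $\mathbf T:=\mathbf T_0^{\otimes m}$ with rows and columns indexed by $\mathcal X=\{0,1\}^m$. For $\sigma\in\mathcal S_m$ let $\mathbf P_\sigma$ be the permutation matrix with $\mathbf P_\sigma\mathbf e_{(x_1,\dots,x_m)}=\mathbf e_{(x_{\sigma(1)},\dots,x_{\sigma(m)})}$ for all $(x_1,\dots,x_m)\in\mathcal X$. Then $$\mathrm{Aut}(\mathbf T)=\{\mathbf P_\sigma:\sigma\in\mathcal S_m\},$$ and consequently $\mathrm{Aut}(\mathbf T)\cong\mathcal S_m$ and $|\mathrm{Aut}(\mathbf T)|=m!$.
   Context: $\mathbf T_0=\begin{pmatrix}1&0\\1&1\end{pmatrix}$; rows/columns of $\mathbf T_0^{\otimes m}$ are indexed by $x\in\{0,1\}^m$ via the Kronecker rule $(\mathbf A\otimes\mathbf B)_{(x_1,x'),(y_1,y')}=\mathbf A_{x_1,y_1}\mathbf B_{x',y'}$. $\mathrm{Aut}(\mathbf T)$ is the set of permutation matrices $\mathbf P$ with $\mathbf P^\top\mathbf T\mathbf P=\mathbf T$. $\mathcal S_m$ is the symmetric group on $[m]$; $\mathbf e_x$ is the standard basis vector indexed by $x$. *)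

From mathcomp Require Import all_boot all_order all_fingroup all_algebra.
Set Implicit Arguments. Unset Strict Implicit. Unset Printing Implicit Defensive.
Import GRing.Theory.
Local Open Scope ring_scope.

(* Index set X = {0,1}^m, as functions 'I_m -> bool (false = 0, true = 1). *)
Definition Xm (m : nat) : finType := {ffun 'I_m -> bool}.
(* Matrices indexed by X are represented as 'M[int]_#|X|, where the ordinal
   index i stands for the bit-vector enum_val i (a fixed bijection). *)
Definition nX (m : nat) : nat := #|Xm m|.
Definition bit (b : bool) : 'I_2 := if b then ord_max else ord0.

Definition T0 : 'M[int]_2 :=
  \matrix_(i < 2, j < 2) (if i == ord0 then (if j == ord0 then 1 else 0) else 1).

(* T = T0^{(x) m}: by the Kronecker rule its (x,y) entry is
   prod_k T0_{x_k, y_k}. *)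
Definition Tm (m : nat) : 'M[int]_(nX m) :=
  \matrix_(i, j) \prod_(k < m)
     T0 (bit ((enum_val i : Xm m) k)) (bit ((enum_val j : Xm m) k)).

(* P_sigma e_x = e_{(x_{sigma 1},...,x_{sigma m})}, i.e. column x has its
   single 1 in row  x o sigma. *)
Definition Pmx (m : nat) (s : 'S_m) : 'M[int]_(nX m) :=
  \matrix_(u, v)
    ((enum_val u : Xm m) == [ffun k => (enum_val v : Xm m) (s k)])%:R.

Definition AutT (n : nat) (T : 'M[int]_n) : pred 'M[int]_n :=
  [pred P | is_perm_mx P && (P^T *m T *m P == T)].

From mathcomp Require Import all_boot all_order all_fingroup all_algebra.
Set Implicit Arguments. Unset Strict Implicit. Unset Printing Implicit Defensive.
Import GRing.Theory.
Local Open Scope ring_scope.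

(* Writing X for {0,1}^m, the entry T_{x,y} is 1 exactly when y <= x
   coordinatewise, so a permutation matrix is an automorphism of T iff it
   comes from an automorphism of the Boolean lattice (X, <=).  Such an
   automorphism fixes the bottom element and permutes the atoms, i.e. the unit
   vectors e_k; as x_k = [e_k <= x], it is then the coordinate permutation
   x |-> x o s with s determined by the images of the atoms. *)

Definition lebits (I : finType) (x y : {ffun I -> bool}) := [forall k, x k ==> y k].
Definition bits0 (I : finType) : {ffun I -> bool} := [ffun=> false].
Definition delta_bits (I : finType) (k : I) : {ffun I -> bool} := [ffun j => j == k].
Definition perm_bits (I : finType) (s : {perm I}) (x : {ffun I -> bool}) :
  {ffun I -> bool} := [ffun k => x (s k)].

Section BooleanLattice.

Variable I : finType.
Implicit Types (x y : {ffun I -> bool}) (k : I) (s t : {perm I}).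

Lemma lebits_delta k x : lebits (delta_bits k) x = x k.
Proof.
apply/forallP/idP => [/(_ k)|xk j]; first by rewrite ffunE eqxx.
by rewrite ffunE; apply/implyP => /eqP->.
Qed.

Lemma bits0_le x : lebits (bits0 I) x.
Proof. by apply/forallP => k; rewrite ffunE. Qed.

Lemma lebits0 x : lebits x (bits0 I) -> x = bits0 I.
Proof.
by move=> /forallP x0; apply/ffunP => k; have := x0 k; rewrite !ffunE; case: (x k).
Qed.

Lemma delta_bits_neq0 k : delta_bits k <> bits0 I.
Proof. by move/ffunP/(_ k); rewrite !ffunE eqxx. Qed.

Lemma delta_bits_inj : injective (@delta_bits I).
Proof. by move=> k k' /ffunP/(_ k); rewrite !ffunE eqxx => /esym/eqP. Qed.

Definition atom x := x <> bits0 I /\ forall y, lebits y x -> y = bits0 I \/ y = x.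

Lemma atom_delta k : atom (delta_bits k).
Proof.
split=> [|y /forallP yk]; first exact: delta_bits_neq0.
case yk_true: (y k); [right|left]; apply/ffunP => j; have := yk j; rewrite !ffunE.
  by case: eqP => [->|_]; case: (y j).
by case: eqP => [->|_]; rewrite ?yk_true //; case: (y j).
Qed.

Lemma atom_is_delta x : atom x -> exists k, x = delta_bits k.
Proof.
move=> [x_neq0 x_atom]; case: (pickP (fun k => x k)) => [k xk|x_false]; last first.
  by case: x_neq0; apply/ffunP => j; rewrite ffunE x_false.
have := x_atom (delta_bits k); rewrite lebits_delta xk => /(_ isT).
by case=> [/delta_bits_neq0 //|<-]; exists k.
Qed.

Lemma lebits_perm s x y : lebits (perm_bits s x) (perm_bits s y) = lebits x y.
Proof.
apply/forallP/forallP => le_xy k; last by rewrite !ffunE; exact: le_xy.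
by have := le_xy (s^-1 k)%g; rewrite !ffunE permKV.
Qed.

Lemma perm_bitsM s t x : perm_bits (s * t) x = perm_bits s (perm_bits t x).
Proof. by apply/ffunP => k; rewrite !ffunE permM. Qed.

Lemma perm_bitsK s : cancel (perm_bits s) (perm_bits s^-1).
Proof. by move=> x; apply/ffunP => k; rewrite !ffunE permKV. Qed.

Lemma perm_bitsKV s : cancel (perm_bits s^-1) (perm_bits s).
Proof. by move=> x; apply/ffunP => k; rewrite !ffunE permK. Qed.

Lemma perm_bits_delta s k j : perm_bits s (delta_bits k) j = (s j == k).
Proof. by rewrite !ffunE. Qed.

Lemma eq_perm_bits s t : perm_bits s =1 perm_bits t -> s = t.
Proof.
move=> eq_st; apply/permP => j; apply/eqP.
by rewrite -perm_bits_delta eq_st perm_bits_delta.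
Qed.

Section LatticeAutomorphism.

Variable f : {ffun I -> bool} -> {ffun I -> bool}.
Hypothesis f_inj : injective f.
Hypothesis lebits_f : forall x y, lebits (f x) (f y) = lebits x y.

Lemma f_bits0 : f (bits0 I) = bits0 I.
Proof.
have [g fK gK] := injF_bij f_inj.
by apply: lebits0; rewrite -{2}(gK (bits0 I)) lebits_f bits0_le.
Qed.

Lemma atom_f x : atom x -> atom (f x).
Proof.
have [g fK gK] := injF_bij f_inj.
move=> [x_neq0 x_atom]; split; first by rewrite -f_bits0 => /f_inj.
move=> y; rewrite -(gK y) lebits_f => /x_atom[->|->]; [left; exact: f_bits0|by right].
Qed.

Lemma lattice_automorphism_perm_bits : exists s, f =1 perm_bits s.
Proof.
have f_delta k : exists j, f (delta_bits k) = delta_bits j.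
  exact/atom_is_delta/atom_f/atom_delta.
pose tau k := odflt k [pick j | f (delta_bits k) == delta_bits j].
have tauE k : f (delta_bits k) = delta_bits (tau k).
  rewrite /tau; case: pickP => [j /eqP //|none].
  by have [j fk] := f_delta k; have := none j; rewrite fk eqxx.
have tau_inj : injective tau.
  by move=> k k' eq_tau; apply/delta_bits_inj/f_inj; rewrite !tauE eq_tau.
exists (perm tau_inj)^-1%g => x; apply/ffunP => j; rewrite ffunE.
rewrite -[x _]lebits_delta -lebits_f -lebits_delta tauE.
by rewrite -[tau _](permE tau_inj) permKV.
Qed.

End LatticeAutomorphism.

End BooleanLattice.

Section PermMx.

Variables (R : nzSemiRingType) (n : nat).
Implicit Types (p : 'S_n) (A : 'M[R]_n).

Lemma perm_mx_inj : injective (@perm_mx R n).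
Proof.
move=> p q /matrixP eq_pq; apply/permP => i; have := eq_pq i (p i); rewrite !mxE eqxx.
by case: eqP => // _ /eqP; rewrite oner_eq0.
Qed.

Lemma perm_mx_conj p A :
  (perm_mx p)^T *m A *m perm_mx p = \matrix_(i, j) A (p^-1 i)%g (p^-1 j)%g.
Proof.
rewrite tr_perm_mx -row_permE -[p in perm_mx p]invgK -col_permE.
by apply/matrixP => i j; rewrite !mxE.
Qed.

Lemma perm_mx_conj_id p A :
  (perm_mx p)^T *m A *m perm_mx p = A <-> forall i j, A (p i) (p j) = A i j.
Proof.
rewrite perm_mx_conj; split=> [/matrixP A_inv i j|A_inv].
  by have := A_inv (p i) (p j); rewrite mxE !permK => ->.
by apply/matrixP => i j; rewrite mxE -A_inv !permKV.
Qed.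

End PermMx.

Section KroneckerPower.

Variable m : nat.
Implicit Types (s t : 'S_m) (u v : 'I_(nX m)).

Lemma TmE u v : Tm m u v = (lebits (enum_val v : Xm m) (enum_val u))%:R.
Proof.
rewrite mxE; have [le_vu|] := boolP (lebits _ _).
  rewrite big1 // => k _; have := forallP le_vu k; rewrite /T0 mxE /bit.
  by case: (enum_val u k); case: (enum_val v k).
rewrite negb_forall => /existsP[k not_le_k]; rewrite (bigD1 k) //=.
move: not_le_k; rewrite /T0 mxE /bit.
by case: (enum_val u k); case: (enum_val v k) => // _; rewrite mul0r.
Qed.

(* The s^-1 makes s |-> Xperm s a homomorphism rather than an anti-homomorphism. *)
Definition Xperm_fun s u : 'I_(nX m) := enum_rank (perm_bits s^-1 (enum_val u : Xm m)).

Lemma Xperm_fun_inj s : injective (Xperm_fun s).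
Proof. by move=> u v /enum_rank_inj/(can_inj (perm_bitsKV s))/enum_val_inj. Qed.

Definition Xperm s : 'S_(nX m) := perm (@Xperm_fun_inj s).

Lemma XpermE s u : Xperm s u = enum_rank (perm_bits s^-1 (enum_val u : Xm m)).
Proof. exact: permE. Qed.

Lemma PmxE s : Pmx s = perm_mx (Xperm s).
Proof.
apply/matrixP => u v; rewrite !mxE XpermE -/(perm_bits s _); congr (nat_of_bool _)%:R.
apply/eqP/eqP => [->|<-]; first by rewrite perm_bitsK enum_valK.
by rewrite enum_rankK perm_bitsKV.
Qed.

Lemma XpermM s t : Xperm (s * t) = (Xperm s * Xperm t)%g.
Proof. by apply/permP => u; rewrite permM !XpermE enum_rankK invMg perm_bitsM. Qed.

Lemma Xperm_inj : injective Xperm.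
Proof.
move=> s t /permP eq_st; apply: invg_inj; apply: eq_perm_bits => x.
by have := eq_st (enum_rank x); rewrite !XpermE enum_rankK => /enum_rank_inj.
Qed.

Lemma Pmx_inj : injective (@Pmx m).
Proof. by move=> s t; rewrite !PmxE => /perm_mx_inj/Xperm_inj. Qed.

Lemma PmxM s t : Pmx s *m Pmx t = Pmx (s * t)%g.
Proof. by rewrite !PmxE -perm_mxM XpermM. Qed.

Lemma Tm_Xperm s u v : Tm m (Xperm s u) (Xperm s v) = Tm m u v.
Proof. by rewrite !TmE !XpermE !enum_rankK lebits_perm. Qed.

Lemma AutT_Tm P : P \in AutT (Tm m) <-> exists s, P = Pmx s.
Proof.
split=> [|[s ->]]; last first.
  by rewrite PmxE inE perm_mx_is_perm; apply/eqP/perm_mx_conj_id; exact: Tm_Xperm.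
rewrite inE => /andP[/is_perm_mxP[p ->] /eqP/perm_mx_conj_id Tm_p].
pose f x : Xm m := enum_val (p (enum_rank x)).
have f_inj : injective f by move=> x y /enum_val_inj/perm_inj/enum_rank_inj.
have lebits_f x y : lebits (f x) (f y) = lebits x y.
  have := Tm_p (enum_rank y) (enum_rank x); rewrite !TmE !enum_rankK.
  by case: (lebits _ _); case: (lebits _ _).
have [t f_t] := lattice_automorphism_perm_bits f_inj lebits_f.
exists t^-1%g; rewrite PmxE; congr perm_mx; apply/permP => u.
by rewrite XpermE invgK -f_t /f !enum_valK.
Qed.

End KroneckerPower.

Theorem mainTheorem12 (m : nat) :
  (forall P : 'M[int]_(nX m), P \in AutT (Tm m) <-> exists s : 'S_m, P = Pmx s)
  /\ injective (@Pmx m)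
  /\ (forall s t : 'S_m, Pmx s *m Pmx t = Pmx (s * t)%g)
  /\ (exists L : seq 'M[int]_(nX m),
        [/\ uniq L, size L = m`!%N & forall P, P \in AutT (Tm m) <-> P \in L]).
Proof.
split; first exact: AutT_Tm.
split; first exact: Pmx_inj.
split; first exact: PmxM.
exists (map (@Pmx m) (enum {perm 'I_m})); split.
- by rewrite (map_inj_uniq (@Pmx_inj m)) enum_uniq.
- by rewrite size_map -cardE card_Sn.
- move=> P; split=> [/AutT_Tm[s ->]|/mapP[s _ ->]]; last by apply/AutT_Tm; exists s.
  by rewrite map_f ?mem_enum.
Qed.
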